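(* Let $k\ge1$ and let $p=(p_1,\dots,p_n)$ be a parking function. Then the permutation $\pi(p)$ avoids the pattern $(k+1)k\cdots1$ if and only if the word $p_1\cdots p_n$ avoids $(k+1)k\cdots 1$ as a word, i.e. there are no indices $i_1<\dots<i_{k+1}$ with $p_{i_1}>p_{i_2}>\dots>p_{i_{k+1}}$.
   Context: $[n]=\{1,\dots,n\}$. A tuple $p\in[n]^n$ is a parking function if its weakly increasing rearrangement $(p'_1,\dots,p'_n)$ satisfies $p'_i\le i$ for all $i$. $\pi(p)$ is the permutation obtained by listing, for $s=1,\dots,n$ in turn, the indices $j$ with $p_j=s$ in increasing order, and concatenating. A permutation avoids $\sigma\in\mathfrak S_m$ if none of its length-$m$ subsequences is order-isomorphic to $\sigma$. *)

From mathcomp Require Import all_boot.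
Unset Printing Implicit Defensive.

(* Words/tuples are seq nat; positions are 0-based internally, values as in paper
   (1-based, p_j in [n] = {1..n}). *)

Definition is_parking_function (n : nat) (p : seq nat) : bool :=
  [&& size p == n,
      all (fun x => (1 <= x <= n)) p &
      let p' := sort leq p in
      [forall i : 'I_n, nth 0 p' i <= i.+1]].

Definition parking_perm (n : nat) (p : seq nat) : seq nat :=
  flatten [seq [seq j <- iota 1 n | nth 0 p j.-1 == s] | s <- iota 1 n].

(* The word w contains a decreasing pattern of length m: indices
   i_1 < ... < i_m with w_{i_1} > ... > w_{i_m}. For a permutation, being
   order-isomorphic to m(m-1)...1 is exactly this. *)
Definition contains_decreasing (m : nat) (w : seq nat) : Prop :=
  exists f : 'I_m -> 'I_(size w),
    forall a b : 'I_m, a < b ->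
      (f a < f b) /\ (nth 0 w (f b) < nth 0 w (f a)).

Definition avoids_decreasing (m : nat) (w : seq nat) : Prop :=
  ~ contains_decreasing m w.

(** Read [pi(p)] as the list of positions [j] sorted lexicographically by
    [(p_j, j)].  A descent [x > y] of [pi(p)] (x listed before y) then forces
    [p_x < p_y], i.e. the positions [y < x] carry a descent of the word [p];
    conversely a descent [p_i > p_j], [i < j], of the word puts [j] before [i]
    in [pi(p)], giving a descent there.  Both maps turn a decreasing chain into
    a decreasing chain read backwards, so the two avoidance properties agree. *)

From mathcomp Require Import all_boot.
From mathcomp Require Import zify.

Definition inversion (w : seq nat) (i j : nat) : Prop :=
  i < j /\ nth 0 w j < nth 0 w i.

Lemma contains_decreasing_transfer {m : nat} {w w' : seq nat}
    (phi : 'I_(size w) -> 'I_(size w')) :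
  (forall i j : 'I_(size w), inversion w i j -> inversion w' (phi j) (phi i)) ->
  contains_decreasing m w -> contains_decreasing m w'.
Proof.
move=> phi_inv [f f_dec]; exists (fun a => phi (f (rev_ord a))) => a b lt_ab.
apply: phi_inv; apply: f_dec; rewrite /= ltn_sub2l //.
exact: leq_trans (ltn_ord b).
Qed.

Lemma ltn_index_sorted {T : eqType} {ltT : rel T} {s : seq T} {x y : T} :
  transitive ltT -> irreflexive ltT -> sorted ltT s ->
  x \in s -> y \in s -> ltT x y -> index x s < index y s.
Proof.
move=> lt_trans lt_irr s_sorted xs ys lt_xy; rewrite ltnNge leq_eqVlt.
case: eqVneq => [eq_idx|_] /=.
  by move: lt_xy; rewrite -(nth_index x xs) -(nth_index x ys) eq_idx lt_irr.
apply/negP=> /(sorted_ltn_index lt_trans s_sorted _ _ ys xs) lt_yx.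
by move: (lt_trans _ _ _ lt_xy lt_yx); rewrite lt_irr.
Qed.

Section LexKey.

Variable key : nat -> nat.

Definition lex_key : rel nat :=
  fun x y => (key x < key y) || (key x == key y) && (x < y).

Lemma lex_key_trans : transitive lex_key.
Proof. by move=> y x z; rewrite /lex_key; lia. Qed.

Lemma lex_key_irr : irreflexive lex_key.
Proof. by move=> x; rewrite /lex_key; lia. Qed.

Lemma pairwise_lex_key_blocks (r t : seq nat) :
  sorted ltn r -> sorted ltn t ->
  pairwise lex_key (flatten [seq [seq j <- r | key j == s] | s <- t]).
Proof.
rewrite !(sorted_pairwise ltn_trans).
move=> r_lt; elim: t => //= s t IHt /andP[s_lt t_lt].
rewrite pairwise_cat IHt // andbT; apply/andP; split.
  apply/allrelP=> x y; rewrite mem_filter => /andP[/eqP key_x _].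
  case/flatten_mapP=> s' s't; rewrite mem_filter => /andP[/eqP key_y _].
  by rewrite /lex_key key_x key_y (allP s_lt).
apply: (sub_in_pairwise (P := fun j => key j == s) (r := ltn)).
- by move=> x y /eqP key_x /eqP key_y; rewrite /lex_key key_x key_y eqxx ltnn.
- by apply/allP=> x; rewrite mem_filter => /andP[].
- exact: pairwise_filter.
Qed.

End LexKey.

Section ParkingPerm.

Variables (n : nat) (p : seq nat).

(* Positions are 1-based in [parking_perm], hence the shift. *)
Local Notation value j := (nth 0 p j.-1).
Local Notation pi := (parking_perm n p).

Lemma sorted_parking_perm : sorted (lex_key (fun j => value j)) pi.
Proof.
rewrite sorted_pairwise; last exact: lex_key_trans.
by apply: pairwise_lex_key_blocks; apply: iota_ltn_sorted.
Qed.

Lemma mem_parking_perm j :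
  (j \in pi) = (j \in iota 1 n) && (value j \in iota 1 n).
Proof.
apply/flatten_mapP/andP=> [[s s_n]|[j_n v_n]].
  by rewrite mem_filter => /andP[/eqP -> ->].
by exists (value j); rewrite // mem_filter eqxx.
Qed.

Lemma parking_perm_bound u : u < size pi -> 0 < nth 0 pi u <= n.
Proof.
by move=> /(mem_nth 0); rewrite mem_parking_perm mem_iota add1n ltnS => /andP[].
Qed.

Lemma parking_perm_inversion_word u v : inversion pi u v ->
  v < size pi -> inversion p (nth 0 pi v).-1 (nth 0 pi u).-1.
Proof.
move=> [lt_uv lt_piv] v_pi; have u_pi : u < size pi by lia.
have := sorted_ltn_nth (lex_key_trans _) 0 sorted_parking_perm _ _ u_pi v_pi lt_uv.
by rewrite /lex_key /inversion; have := parking_perm_bound _ v_pi; lia.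
Qed.

Hypotheses (size_p : size p = n) (p_range : all (fun x => 1 <= x <= n) p).

Lemma mem_parking_perm_succ i : i < size p -> i.+1 \in pi.
Proof.
move=> lt_i; have /= p_i := allP p_range _ (mem_nth 0 lt_i).
by rewrite mem_parking_perm !mem_iota /= add1n !ltnS p_i -size_p lt_i.
Qed.

Lemma word_inversion_parking_perm i j : inversion p i j -> j < size p ->
  inversion pi (index j.+1 pi) (index i.+1 pi).
Proof.
move=> [lt_ij lt_pj] j_p; have i_p : i < size p by lia.
rewrite /inversion !nth_index ?mem_parking_perm_succ //; split; last by [].
apply: (ltn_index_sorted (lex_key_trans _) (lex_key_irr _) sorted_parking_perm);
  rewrite ?mem_parking_perm_succ //.
by rewrite /lex_key /= lt_pj.
Qed.

Lemma contains_decreasing_parking_perm m :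
  contains_decreasing m pi <-> contains_decreasing m p.
Proof.
split.
  have pi_p u : u < size pi -> (nth 0 pi u).-1 < size p.
    by move=> /parking_perm_bound; lia.
  apply: (contains_decreasing_transfer (fun u => Ordinal (pi_p u (ltn_ord u)))).
  by move=> u v uv; apply: parking_perm_inversion_word.
have p_pi i : i < size p -> index i.+1 pi < size pi.
  by move=> /mem_parking_perm_succ; rewrite index_mem.
apply: (contains_decreasing_transfer (fun i => Ordinal (p_pi i (ltn_ord i)))).
by move=> i j ij; apply: word_inversion_parking_perm.
Qed.

End ParkingPerm.

Theorem corollary2p10 (k n : nat) (p : seq nat) :
  1 <= k ->
  is_parking_function n p ->
  (avoids_decreasing (k.+1) (parking_perm n p) <-> avoids_decreasing (k.+1) p).
Proof.
move=> _ /and3P[/eqP size_p p_range _].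
have := contains_decreasing_parking_perm n p size_p p_range k.+1.
by rewrite /avoids_decreasing; tauto.
Qed.
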